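(* For every $w\in\mathcal{W}$, the set $D^1(w):=\operatorname{conv}(\mathcal{P}\setminus\operatorname{int}(\mathcal{C}_{\rm ID}(w)))$ is a polyhedron.
   Context: Data: $d^2\in\mathbb{Q}^{n_2}$; $A^1\in\mathbb{Q}^{m_1\times n_1}$, $G^1\in\mathbb{Q}^{m_1\times n_2}$, $b^1\in\mathbb{Q}^{m_1}$; $A^2\in\mathbb{Q}^{m_2\times n_1}$, $G^2\in\mathbb{Q}^{m_2\times n_2}$, $b^2\in\mathbb{Q}^{m_2}$; integers $0\le r_1\le n_1$, $0\le r_2\le n_2$. $\mathcal{P}=\{(x,y)\in\mathbb{R}_+^{n_1}\times\mathbb{R}_+^{n_2}: G^1y\ge b^1-A^1x,\ G^2y\ge b^2-A^2x\}$, assumed bounded. An improving direction is $w\in\mathbb{Z}^{r_2}\times\mathbb{R}^{n_2-r_2}$ with $d^2w<0$; $\mathcal{W}$ is the set of all improving directions. For $w\in\mathcal{W}$, $\mathcal{C}_{\rm ID}(w)=\{(x,y)\in\mathbb{R}^{n_1}\times\mathbb{R}^{n_2}: A^2x+G^2(y+w)\ge b^2-\mathbf{1},\ y+w\ge-\mathbf{1}\}$, where $\mathbf{1}$ denotes the all-ones vector of appropriate dimension; $\operatorname{int}$ denotes topological interior. *)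

From HB Require Import structures.
From mathcomp Require Import all_boot all_order all_algebra.
From mathcomp Require Import all_classical all_reals all_analysis.
Set Implicit Arguments. Unset Strict Implicit. Unset Printing Implicit Defensive.
Import Order.TTheory GRing.Theory Num.Theory.
Import numFieldNormedType.Exports.
Local Open Scope classical_set_scope.
Local Open Scope ring_scope.

Definition leV (R : realType) (k : nat) (u v : 'cV[R]_k) : Prop :=
  forall i : 'I_k, u i ord0 <= v i ord0.

Definition mxR (R : realType) (m n : nat) (A : 'M[rat]_(m, n)) : 'M[R]_(m, n) :=
  map_mx (fun q : rat => ratr q) A.
Arguments mxR {R m n} A.

Definition ones (R : realType) (k : nat) : 'cV[R]_k := const_mx 1.

Notation pt R n1 n2 := ('cV[R]_n1 * 'cV[R]_n2)%type.

Definition Pset (R : realType) (n1 n2 m1 m2 : nat)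
  (A1 : 'M[rat]_(m1, n1)) (G1 : 'M[rat]_(m1, n2)) (b1 : 'cV[rat]_m1)
  (A2 : 'M[rat]_(m2, n1)) (G2 : 'M[rat]_(m2, n2)) (b2 : 'cV[rat]_m2)
  : set (pt R n1 n2) :=
  [set p | leV 0 p.1 /\ leV 0 p.2 /\
           leV (mxR b1 - mxR A1 *m p.1) (mxR G1 *m p.2) /\
           leV (mxR b2 - mxR A2 *m p.1) (mxR G2 *m p.2)].

Definition bounded_pts (R : realType) (n1 n2 : nat) (S : set (pt R n1 n2)) : Prop :=
  exists B : R, forall p, S p ->
    (forall i, `|p.1 i ord0| <= B) /\ (forall j, `|p.2 j ord0| <= B).

Definition improving (R : realType) (n2 r2 : nat) (d2 : 'rV[rat]_n2)
  (w : 'cV[R]_n2) : Prop :=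
  (forall i : 'I_n2, (i < r2)%N -> w i ord0 \is a Num.int) /\
  (mxR d2 *m w) ord0 ord0 < 0.

Definition C_ID (R : realType) (n1 n2 m2 : nat)
  (A2 : 'M[rat]_(m2, n1)) (G2 : 'M[rat]_(m2, n2)) (b2 : 'cV[rat]_m2)
  (w : 'cV[R]_n2) : set (pt R n1 n2) :=
  [set p | leV (mxR b2 - ones R m2) (mxR A2 *m p.1 + mxR G2 *m (p.2 + w)) /\
           leV (- ones R n2) (p.2 + w)].

Definition conv_hull (R : realType) (n1 n2 : nat) (S : set (pt R n1 n2))
  : set (pt R n1 n2) :=
  [set p | exists (k : nat) (lam : 'I_k -> R) (q : 'I_k -> pt R n1 n2),
     (forall i, 0 <= lam i) /\ \sum_(i < k) lam i = 1 /\ (forall i, S (q i)) /\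
     p = (\sum_(i < k) lam i *: (q i).1, \sum_(i < k) lam i *: (q i).2)].

Definition polyhedron (R : realType) (n1 n2 : nat) (S : set (pt R n1 n2)) : Prop :=
  exists (k : nat) (M1 : 'M[R]_(k, n1)) (M2 : 'M[R]_(k, n2)) (c : 'cV[R]_k),
    S = [set p | leV (M1 *m p.1 + M2 *m p.2) c].
Arguments Pset R {n1 n2 m1 m2} A1 G1 b1 A2 G2 b2.
Arguments C_ID {R n1 n2 m2} A2 G2 b2 w.

From HB Require Import structures.
From mathcomp Require Import all_boot all_order all_algebra.
From mathcomp Require Import all_classical all_reals all_analysis.
From mathcomp Require Import lra.
Set Implicit Arguments. Unset Strict Implicit. Unset Printing Implicit Defensive.
Import Order.TTheory GRing.Theory Num.Theory.
Import numFieldNormedType.Exports.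
Local Open Scope classical_set_scope.
Local Open Scope ring_scope.

(* A point lies outside the interior of C_ID(w), a system of linear inequalities [f_i >= c_i],
   iff one of the inequalities fails to be strict there; a row with [f_i = 0] is either
   always satisfied or makes C_ID(w) empty.  Hence P \ int C_ID(w) is a finite union of the
   bounded polyhedra [P `&` {f_i <= c_i}].  The convex hull of two nonempty bounded polyhedra
   [A = {a x <= alpha}] and [B = {b x <= beta}] is the projection onto [x] of Balas' lifted
   polyhedron [{(t, u, x) | 0 <= t <= 1, a u <= t alpha, b (x - u) <= (1 - t) beta}]:
   boundedness rules out recession directions at [t = 0] and [t = 1].  Projections of
   polyhedra are polyhedra by Fourier-Motzkin elimination, and an induction on the number
   of pieces concludes. *)

(** * Convex hulls *)

Section ConvexHull.
Variables (R : realType) (V : lmodType R).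
Implicit Types S T : set V.

Definition convex S :=
  forall x y t, S x -> S y -> 0 <= t <= 1 -> S (t *: x + (1 - t) *: y).

Definition convex_hull S : set V :=
  [set x | exists k (lam : 'I_k -> R) (q : 'I_k -> V),
     [/\ forall i, 0 <= lam i, \sum_i lam i = 1, forall i, S (q i)
       & x = \sum_i lam i *: q i]].

Lemma sub_convex_hull S : S `<=` convex_hull S.
Proof.
move=> x Sx; exists 1%N, (fun=> 1), (fun=> x).
by split=> //; rewrite big_ord1 // scale1r.
Qed.

Lemma convex_hull_sub_convex S T : convex T -> S `<=` T -> convex_hull S `<=` T.
Proof.
move=> cT ST _ [k [lam [q [lam_ge0 lam_sum1 Sq ->]]]].
elim: k lam q lam_ge0 lam_sum1 Sq => [|k IHk] lam q lam_ge0 lam_sum1 Sq.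
  by move: lam_sum1; rewrite big_ord0 => /eqP; rewrite eq_sym oner_eq0.
rewrite big_ord_recr /=; rewrite big_ord_recr /= in lam_sum1.
set s := \sum_(i < k) _ in lam_sum1.
have s_ge0 : 0 <= s by apply: sumr_ge0.
have [s0|s_neq0] := eqVneq s 0.
  have lam0 i : lam (widen_ord (leqnSn k) i) = 0 by apply: (psumr_eq0P _ s0).
  rewrite big1 => [|i _]; last by rewrite lam0 scale0r.
  by move: lam_sum1; rewrite s0 add0r => ->; rewrite add0r scale1r; apply: ST.
(* the first [k] points carry total weight [s]: rescale them to a convex combination *)
have s_gt0 : 0 < s by rewrite lt_def s_neq0.
have Tmid :
    T (\sum_(i < k) (lam (widen_ord (leqnSn k) i) / s) *: q (widen_ord (leqnSn k) i)).
  apply: IHk => [i||i]; [exact: divr_ge0 | by rewrite -mulr_suml divff | exact: Sq].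
have s_le1 : s <= 1 by rewrite -lam_sum1 lerDl.
have := cT _ _ s Tmid (ST _ (Sq ord_max)); rewrite s_ge0 s_le1 => /(_ isT).
have -> : 1 - s = lam ord_max by rewrite -lam_sum1 [s + _]addrC addrK.
rewrite scaler_sumr; congr (T (_ + _)); apply: eq_bigr => i _.
by rewrite scalerA mulrC divfK.
Qed.

Lemma convex_convex_hull S : convex (convex_hull S).
Proof.
move=> _ _ t [k1 [a [q [a_ge0 a_sum1 Sq ->]]]] [k2 [b [r [b_ge0 b_sum1 Sr ->]]]].
move=> /andP[t0 t1].
pose c i := match fintype.split i with inl i => t * a i | inr j => (1 - t) * b j end.
pose p i := match fintype.split i with inl i => q i | inr j => r j end.
have splitl (i : 'I_k1) : fintype.split (lshift k2 i) = inl i.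
  exact: (@unsplitK k1 k2 (inl i)).
have splitr (j : 'I_k2) : fintype.split (rshift k1 j) = inr j.
  exact: (@unsplitK k1 k2 (inr j)).
exists (k1 + k2)%N, c, p; split => [i||i|].
- by rewrite /c; case: fintype.split => j; apply: mulr_ge0; rewrite ?subr_ge0.
- rewrite big_split_ord /c; under eq_bigr do rewrite splitl.
  under [X in _ + X = _]eq_bigr do rewrite splitr.
  by rewrite -!mulr_sumr a_sum1 b_sum1 !mulr1 subrKC.
- by rewrite /p; case: fintype.split.
- rewrite big_split_ord /c /p; under [X in _ = X + _]eq_bigr do rewrite splitl.
  under [X in _ = _ + X]eq_bigr do rewrite splitr.
  by rewrite !scaler_sumr; congr (_ + _); apply: eq_bigr => i _; rewrite scalerA.
Qed.

Lemma convex_hull_id S : convex S -> convex_hull S = S.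
Proof.
by move=> cS; apply/seteqP; split; [exact: convex_hull_sub_convex | exact: sub_convex_hull].
Qed.

Lemma convex_hullS S T : S `<=` T -> convex_hull S `<=` convex_hull T.
Proof.
move=> ST; apply: convex_hull_sub_convex (@convex_convex_hull _) _.
by move=> x /ST /sub_convex_hull.
Qed.

Lemma convex_hull_setU S T :
  convex_hull (S `|` T) = convex_hull (convex_hull S `|` convex_hull T).
Proof.
apply/seteqP; split; first by apply: convex_hullS => x [] /sub_convex_hull; [left|right].
by apply: convex_hull_sub_convex (@convex_convex_hull _) _ => x [];
  apply: convex_hullS => y; [left|right].
Qed.

End ConvexHull.

Lemma convex_image (R : realType) (V W : lmodType R) (g : {linear V -> W})
    (S : set V) :
  convex S -> convex (g @` S).
Proof.
move=> cS _ _ t [x Sx <-] [y Sy <-] t01.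
by exists (t *: x + (1 - t) *: y); [exact: cS | rewrite linearD !linearZ].
Qed.

(** * Polyhedra and Fourier-Motzkin elimination *)

Section Polyhedra.
Variable R : realType.
Local Notation vec n := 'cV[R]_n.
Implicit Types (n : nat).

Definition dotv n (a : 'rV[R]_n) (x : vec n) : R := (a *m x) 0 0.

Fact dotv_is_linear n (a : 'rV[R]_n) : linear_for *%R (dotv a).
Proof. by move=> s x y; rewrite /dotv mulmxDr -scalemxAr [LHS]mxE [X in X + _]mxE. Qed.

HB.instance Definition _ n (a : 'rV[R]_n) :=
  GRing.isLinear.Build R (vec n) R *%R (dotv a) (dotv_is_linear a).

Lemma dotv0l n (x : vec n) : dotv 0 x = 0.
Proof. by rewrite /dotv mul0mx mxE. Qed.

Lemma dotvDl n (a b : 'rV[R]_n) x : dotv (a + b) x = dotv a x + dotv b x.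
Proof. by rewrite /dotv mulmxDl mxE. Qed.

Lemma dotvZl n (a : 'rV[R]_n) s x : dotv (s *: a) x = s * dotv a x.
Proof. by rewrite /dotv -scalemxAl mxE. Qed.

Lemma dotvNl n (a : 'rV[R]_n) x : dotv (- a) x = - dotv a x.
Proof. by rewrite /dotv mulNmx mxE. Qed.

Lemma dotv_row m n (M : 'M[R]_(m, n)) (x : vec n) i : dotv (row i M) x = (M *m x) i 0.
Proof. by rewrite /dotv -row_mul mxE. Qed.

Lemma dotv_row_col m k (a : 'rV[R]_m) (b : 'rV[R]_k) u x :
  dotv (row_mx a b) (col_mx u x) = dotv a u + dotv b x.
Proof. by rewrite /dotv mul_row_col mxE. Qed.

Definition halfspaces n (l : seq ('rV[R]_n * R)) : set (vec n) :=
  [set x | forall h, h \in l -> dotv h.1 x <= h.2].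

Definition polyhedral n (S : set (vec n)) := exists l, S = halfspaces l.

Definition coord_bounded n (S : set (vec n)) :=
  exists B, forall x, S x -> forall i, `|x i 0| <= B.

Lemma halfspaces_cat n (l1 l2 : seq ('rV[R]_n * R)) :
  halfspaces (l1 ++ l2) = halfspaces l1 `&` halfspaces l2.
Proof.
apply/seteqP; split=> x /=.
  by move=> H; split=> h hl; apply: H; rewrite mem_cat hl ?orbT.
by move=> [H1 H2] h; rewrite mem_cat => /orP[/H1|/H2].
Qed.

Lemma polyhedralI n (S T : set (vec n)) :
  polyhedral S -> polyhedral T -> polyhedral (S `&` T).
Proof. by move=> [l1 ->] [l2 ->]; exists (l1 ++ l2); rewrite halfspaces_cat. Qed.

Lemma polyhedral_halfspace n (a : 'rV[R]_n) c : polyhedral [set x | dotv a x <= c].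
Proof.
exists [:: (a, c)]; apply/seteqP; split=> x /=; first by move=> H h; rewrite inE => /eqP ->.
by move/(_ (a, c)); apply; rewrite mem_head.
Qed.

Lemma polyhedral0 n : polyhedral (@set0 (vec n)).
Proof.
exists [:: (0, -1)]; apply/seteqP; split=> x //=.
by move/(_ _ (mem_head _ _)); rewrite dotv0l ler0N1.
Qed.

Lemma polyhedral_if n (Q : Prop) (S : set (vec n)) :
  polyhedral S -> polyhedral [set x | Q /\ S x].
Proof.
have [q|nq] := pselect Q => polS.
  by have -> : [set x | Q /\ S x] = S by apply/seteqP; split=> x // [].
have -> : [set x | Q /\ S x] = set0 by apply/seteqP; split=> x // [/nq].
exact: polyhedral0.
Qed.

Lemma polyhedral_geV n k (M : 'M[R]_(k, n)) (c : vec k) :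
  polyhedral [set x | leV c (M *m x)].
Proof.
exists [seq (- row i M, - c i 0) | i <- enum 'I_k]; apply/seteqP; split=> x /= H.
  by move=> _ /mapP[i _ ->] /=; rewrite dotvNl dotv_row lerN2; exact: H.
move=> i; have := H _ (map_f (fun i => (- row i M, - c i 0)) (mem_enum _ i)).
by rewrite /= dotvNl dotv_row lerN2.
Qed.

Lemma convex_halfspaces n (l : seq ('rV[R]_n * R)) : convex (halfspaces l).
Proof.
move=> x y t Hx Hy /andP[t0 t1] h hl.
rewrite linearD !linearZ /=.
have t1' : 0 <= 1 - t by rewrite subr_ge0.
have := ler_wpM2l t0 (Hx h hl); have := ler_wpM2l t1' (Hy h hl); lra.
Qed.

Lemma convex_polyhedral n (S : set (vec n)) : polyhedral S -> convex S.
Proof. by move=> [l ->]; exact: convex_halfspaces. Qed.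

Lemma coord_bounded_sub n (S T : set (vec n)) :
  S `<=` T -> coord_bounded T -> coord_bounded S.
Proof. by move=> ST [B HB]; exists B => x /ST; exact: HB. Qed.

Lemma coord_bounded_setU n (S T : set (vec n)) :
  coord_bounded S -> coord_bounded T -> coord_bounded (S `|` T).
Proof.
move=> [B1 HB1] [B2 HB2]; exists (Num.max B1 B2) => x [/HB1|/HB2] Hx i.
  by rewrite le_max Hx.
by rewrite le_max Hx orbT.
Qed.

Lemma coord_bounded_convex_hull n (S : set (vec n)) :
  coord_bounded S -> coord_bounded (convex_hull S).
Proof.
move=> [B HB]; exists B; apply: convex_hull_sub_convex HB => x y t /= Hx Hy /andP[t0 t1] i.
have t1' : 0 <= 1 - t by rewrite subr_ge0.
rewrite !mxE; apply: le_trans (ler_normD _ _) _.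
rewrite !normrM (ger0_norm t0) (ger0_norm t1').
have := ler_wpM2l t0 (Hx i); have := ler_wpM2l t1' (Hy i); lra.
Qed.

Lemma halfspaces_recession n (l : seq ('rV[R]_n * R)) (p u : vec n) :
  halfspaces l p -> coord_bounded (halfspaces l) ->
  (forall h, h \in l -> dotv h.1 u <= 0) -> u = 0.
Proof.
move=> Hp [B HB] Hu.
have ray t : 0 <= t -> halfspaces l (p + t *: u).
  move=> t0 h hl; rewrite linearD linearZ /=.
  by have := Hp h hl; have := mulr_ge0_le0 t0 (Hu h hl); lra.
apply/matrixP => i j; rewrite [j]ord1 mxE; apply/eqP/negPn/negP => ui_neq0.
have B_ge0 : 0 <= B := le_trans (normr_ge0 _) (HB p Hp i).
have ui_gt0 : 0 < `|u i 0| by rewrite normr_gt0.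
pose t := (2 * B + 1) / `|u i 0|.
have t_ge0 : 0 <= t by apply: divr_ge0; lra.
have := HB _ (ray t t_ge0) i; rewrite !mxE.
have := HB p Hp i; have := ler_normB (p i 0 + t * u i 0) (p i 0).
rewrite [p i 0 + _]addrC addrK normrM (ger0_norm t_ge0) divfK ?gt_eqF //; lra.
Qed.

End Polyhedra.


Section FourierMotzkin.
Variable R : realType.
Local Notation vec n := 'cV[R]_n.
Implicit Types (n : nat).

Lemma exists_between (I : eqType) (r : seq I) (P Q : pred I) (F G : I -> R) :
  (forall i j, i \in r -> j \in r -> P i -> Q j -> F i <= G j) ->
  exists t, (forall i, i \in r -> P i -> F i <= t) /\
            (forall j, j \in r -> Q j -> t <= G j).
Proof.
move=> FG; set g := \big[Num.min/0]_(j <- r | Q j) G j.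
exists (\big[Num.max/g]_(i <- r | P i) F i); split=> [i ir Pi|j jr Qj].
  exact: le_bigmax_seq.
rewrite big_seq_cond; apply: bigmax_le => [|i /andP[ir Pi]]; last exact: FG.
exact: ge_bigmin_seq.
Qed.

Definition lcoef n (a : 'rV[R]_(1 + n)) : R := lsubmx a 0 0.

Lemma dotv_col_scalar n (a : 'rV[R]_(1 + n)) t x :
  dotv a (col_mx t%:M x) = lcoef a * t + dotv (rsubmx a) x.
Proof.
by rewrite /dotv -{1}(hsubmxK a) mul_row_col mul_mx_scalar mxE [in X in X + _]mxE mulrC.
Qed.

Lemma col_mx_scalarK n (z : vec (1 + n)) : z = col_mx (usubmx z 0 0)%:M (dsubmx z).
Proof. by rewrite -mx11_scalar vsubmxK. Qed.

Definition fourier_motzkin n (l : seq ('rV[R]_(1 + n) * R)) : seq ('rV[R]_n * R) :=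
  [seq (rsubmx h.1, h.2) | h <- l & lcoef h.1 == 0] ++
  [seq (lcoef p.1 *: rsubmx q.1 - lcoef q.1 *: rsubmx p.1,
        lcoef p.1 * q.2 - lcoef q.1 * p.2)
    | p <- [seq p <- l | 0 < lcoef p.1], q <- [seq q <- l | lcoef q.1 < 0]].

Lemma halfspaces_fourier_motzkin n (l : seq ('rV[R]_(1 + n) * R)) :
  halfspaces (fourier_motzkin l) = [set dsubmx z | z in halfspaces l].
Proof.
apply/seteqP; split=> [x Hx|_ [z Hz <-]]; last first.
  rewrite (col_mx_scalarK z) in Hz; set t := usubmx z 0 0 in Hz.
  move=> h; rewrite mem_cat => /orP[/mapP[p]|/allpairsP[[p q] [/= pl ql ->]]].
    rewrite mem_filter => /andP[/eqP p0 pl] -> /=.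
    by have := Hz p pl; rewrite dotv_col_scalar p0 mul0r add0r.
  move: pl ql; rewrite !mem_filter => /andP[p_gt0 pl] /andP[q_lt0 ql] /=.
  rewrite dotvDl dotvNl !dotvZl.
  have := Hz p pl; have := Hz q ql; rewrite !dotv_col_scalar.
  (* weighting [q] by [lcoef p] and [p] by [- lcoef q] cancels the [t] terms *)
  nra.
set bound := fun h : 'rV[R]_(1 + n) * R => (h.2 - dotv (rsubmx h.1) x) / lcoef h.1.
have [t [t_ge t_le]] : exists t,
    (forall h, h \in l -> lcoef h.1 < 0 -> bound h <= t) /\
    (forall h, h \in l -> 0 < lcoef h.1 -> t <= bound h).
  apply: exists_between => q p ql pl q_lt0 p_gt0.
  have /Hx : (lcoef p.1 *: rsubmx q.1 - lcoef q.1 *: rsubmx p.1,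
              lcoef p.1 * q.2 - lcoef q.1 * p.2) \in fourier_motzkin l.
    rewrite mem_cat; apply/orP; right; apply/allpairsP; exists (p, q).
    by rewrite !mem_filter p_gt0 q_lt0 pl ql.
  rewrite /= dotvDl dotvNl !dotvZl /bound ler_ndivrMr // mulrAC ler_pdivrMr //; nra.
exists (col_mx t%:M x); last by rewrite col_mxKd.
move=> h hl; rewrite dotv_col_scalar; case: (ltgtP (lcoef h.1) 0) => [a_lt0|a_gt0|a0].
- by have := t_ge h hl a_lt0; rewrite /bound ler_ndivrMr // mulrC; lra.
- by have := t_le h hl a_gt0; rewrite /bound ler_pdivlMr // mulrC; lra.
- rewrite a0 mul0r add0r; apply: (Hx (rsubmx h.1, h.2)).
  by rewrite mem_cat; apply/orP; left; apply/mapP; exists h; rewrite // mem_filter a0 eqxx.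
Qed.

Lemma polyhedral_dsubmx m n (S : set (vec (m + n))) :
  polyhedral S -> polyhedral [set dsubmx z | z in S].
Proof.
elim: m S => [|m IHm] S [l ->].
  have dsubmx0 (z : vec (0 + n)) : dsubmx z = z.
    by apply/matrixP => i j; rewrite mxE; congr (z _ _); apply: val_inj.
  exists l; apply/seteqP; split=> [_ [z Hz <-]|x Hx]; first by rewrite dsubmx0.
  by exists x; rewrite ?dsubmx0.
have dsubmxS (z : vec (m.+1 + n)) : dsubmx (@dsubmx R 1 (m + n) 1 z) = dsubmx z.
  by apply/matrixP => i j; rewrite !mxE; congr (z _ _); apply: val_inj; rewrite /= addnA.
have /IHm[l' def_l'] : polyhedral [set @dsubmx R 1 (m + n) 1 z | z in halfspaces l].
  by exists (fourier_motzkin l); rewrite halfspaces_fourier_motzkin.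
exists l'; rewrite -def_l'; apply/seteqP.
split=> [_ [z Hz <-]|_ [_ [z Hz <-] <-]]; last by exists z; rewrite ?dsubmxS.
by exists (@dsubmx R 1 (m + n) 1 z); [exists z | rewrite dsubmxS].
Qed.

End FourierMotzkin.

(** * Convex hull of a union of bounded polyhedra *)



Section Balas.
Variables (R : realType) (n : nat) (lA lB : seq ('rV[R]_n * R)).
Local Notation vec n := 'cV[R]_n.

Definition lift (t : R) (u x : vec n) : vec ((1 + n) + n) := col_mx (col_mx t%:M u) x.

Definition lift_row (s : R) (a b : 'rV[R]_n) : 'rV[R]_((1 + n) + n) :=
  row_mx (row_mx s%:M a) b.

Lemma dotv_lift s a b t u x :
  dotv (lift_row s a b) (lift t u x) = s * t + dotv a u + dotv b x.
Proof. by rewrite !dotv_row_col /dotv -scalar_mxM mxE mulr1n. Qed.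

Lemma liftK (z : vec ((1 + n) + n)) :
  z = lift (usubmx (usubmx z) 0 0) (dsubmx (usubmx z)) (dsubmx z).
Proof. by rewrite /lift -mx11_scalar !vsubmxK. Qed.

(* Balas' lifting: [lift t u x] satisfies these iff [u] lies in [t A] and [x - u] in
   [(1 - t) B], in homogenized form so that the degenerate cases [t = 0, 1] are included. *)
Definition balas_ineqs : seq ('rV[R]_((1 + n) + n) * R) :=
  [:: (lift_row (-1) 0 0, 0), (lift_row 1 0 0, 1) &
      [seq (lift_row (- h.2) h.1 0, 0) | h <- lA] ++
      [seq (lift_row h.2 (- h.1) h.1, h.2) | h <- lB]].

Lemma halfspaces_balas t u x :
  halfspaces balas_ineqs (lift t u x) <->
  [/\ 0 <= t <= 1, forall h, h \in lA -> dotv h.1 u <= h.2 * t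
    & forall h, h \in lB -> dotv h.1 (x - u) <= h.2 * (1 - t)].
Proof.
have dotvB (a : 'rV[R]_n) : dotv (- a) u + dotv a x = dotv a (x - u).
  by rewrite dotvNl linearB /= addrC.
split=> [H|[/andP[t0 t1] HA HB] h].
  split=> [|h hA|h hB].
  - have /= := H (lift_row 1 0 0, 1); have /= := H _ (mem_head _ _).
    rewrite !inE eqxx orbT !dotv_lift !dotv0l => t_ge0 /(_ isT) t_le1.
    by apply/andP; split; lra.
  - have /H /= : (lift_row (- h.2) h.1 0, 0) \in balas_ineqs.
      by rewrite !inE mem_cat (map_f (fun h => (lift_row (- h.2) h.1 0, 0))) ?orbT.
    by rewrite dotv_lift dotv0l; lra.
  - have /H /= : (lift_row h.2 (- h.1) h.1, h.2) \in balas_ineqs.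
      by rewrite !inE mem_cat (map_f (fun h => (lift_row h.2 (- h.1) h.1, h.2))) ?orbT.
    by rewrite dotv_lift -addrA dotvB; lra.
rewrite !inE mem_cat => /or3P[/eqP->|/eqP->|/orP[/mapP[{}h hA ->]|/mapP[{}h hB ->]]].
- by rewrite /= dotv_lift !dotv0l; lra.
- by rewrite /= dotv_lift !dotv0l; lra.
- by rewrite /= dotv_lift dotv0l; have := HA h hA; lra.
- by rewrite /= dotv_lift -addrA dotvB; have := HB h hB; lra.
Qed.

Lemma convex_hull_sub_balas :
  convex_hull (halfspaces lA `|` halfspaces lB) `<=`
  [set dsubmx z | z in halfspaces balas_ineqs].
Proof.
apply: convex_hull_sub_convex; first exact: convex_image (@convex_halfspaces _ _ _).
move=> x [Ax|Bx]; [exists (lift 1 x x) | exists (lift 0 0 x)]; rewrite ?col_mxKd //.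
  apply/halfspaces_balas; split=> [|h /Ax|h _]; first by rewrite ler01 lexx.
    by rewrite mulr1.
  by rewrite !subrr linear0 mulr0.
apply/halfspaces_balas; split=> [|h _|h /Bx]; first by rewrite lexx ler01.
  by rewrite linear0 mulr0.
by rewrite !subr0 mulr1.
Qed.

Lemma balas_sub_convex_hull :
  (exists a, halfspaces lA a) -> (exists b, halfspaces lB b) ->
  coord_bounded (halfspaces lA) -> coord_bounded (halfspaces lB) ->
  [set dsubmx z | z in halfspaces balas_ineqs] `<=`
  convex_hull (halfspaces lA `|` halfspaces lB).
Proof.
move=> [a Aa] [b Bb] bA bB _ [z + <-]; rewrite [z]liftK /lift col_mxKd -/(lift _ _ _).
set t := usubmx _ 0 0; set u := dsubmx _; set x := dsubmx z.
move=> /halfspaces_balas[/andP[t_ge0 t_le1] HA HB].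
have [t0|t_neq0] := eqVneq t 0.
  have u0 : u = 0.
    by apply: (halfspaces_recession Aa bA) => h /HA; rewrite t0 mulr0.
  by apply: sub_convex_hull; right => h /HB; rewrite u0 subr0 t0 subr0 mulr1.
have [t1|t_neq1] := eqVneq t 1.
  have xu : x - u = 0.
    by apply: (halfspaces_recession Bb bB) => h /HB; rewrite t1 subrr mulr0.
  apply: sub_convex_hull; left => h /HA.
  by rewrite t1 mulr1 -(subr0 x) -xu opprB addrC subrK.
have t_gt0 : 0 < t by rewrite lt_def t_neq0.
have t_lt1 : 0 < 1 - t by rewrite subr_gt0 lt_def eq_sym t_neq1.
have -> : x = t *: (t^-1 *: u) + (1 - t) *: ((1 - t)^-1 *: (x - u)).
  by rewrite !scalerA !divff ?gt_eqF // !scale1r addrC subrK.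
apply: convex_convex_hull; [apply: sub_convex_hull; left|apply: sub_convex_hull; right|].
- move=> h /HA hA; rewrite linearZ /= -(ler_pM2l t_gt0) mulrA divff ?gt_eqF //.
  by rewrite mul1r mulrC.
- move=> h /HB hB; rewrite linearZ /= -(ler_pM2l t_lt1) mulrA divff ?gt_eqF //.
  by rewrite mul1r mulrC.
- by rewrite t_ge0 t_le1.
Qed.

End Balas.

Section ConvexHullUnion.
Variable R : realType.
Local Notation vec n := 'cV[R]_n.

Lemma polyhedral_convex_hull_setU n (S T : set (vec n)) :
  polyhedral S -> polyhedral T -> coord_bounded S -> coord_bounded T ->
  polyhedral (convex_hull (S `|` T)).
Proof.
move=> polS polT; move: (polS) (polT) => [lA defS] [lB defT] bS bT.
have [->|/set0P neS] := eqVneq S set0.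
  by rewrite set0U convex_hull_id //; exact: convex_polyhedral.
have [->|/set0P neT] := eqVneq T set0.
  by rewrite setU0 convex_hull_id //; exact: convex_polyhedral.
suff -> : convex_hull (S `|` T) = [set dsubmx z | z in halfspaces (balas_ineqs lA lB)].
  by apply: polyhedral_dsubmx; exists (balas_ineqs lA lB).
rewrite defS defT in neS neT bS bT *; apply/seteqP; split.
  exact: convex_hull_sub_balas.
exact: balas_sub_convex_hull.
Qed.

Lemma polyhedral_convex_hull_bigcup n (I : finType) (S : I -> set (vec n)) :
  (forall i, polyhedral (S i)) -> (forall i, coord_bounded (S i)) ->
  polyhedral (convex_hull (\bigcup_i S i)).
Proof.
move=> polS bS.
have -> : \bigcup_i S i = \big[setU/set0]_i S i.
  by rewrite -bigcup_pred; apply: eq_bigcupl; split=> i.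
suff [] : polyhedral (convex_hull (\big[setU/set0]_i S i)) /\
          coord_bounded (\big[setU/set0]_i S i) by [].
apply: (big_ind (fun X => polyhedral (convex_hull X) /\ coord_bounded X)).
- by rewrite convex_hull_id; [split; [exact: polyhedral0 | exists 0] | move=> ? ? ? []].
- move=> X Y [polX bX] [polY bY]; split; last exact: coord_bounded_setU.
  by rewrite convex_hull_setU; apply: polyhedral_convex_hull_setU => //;
    exact: coord_bounded_convex_hull.
- move=> i _; rewrite convex_hull_id //; exact: convex_polyhedral.
Qed.

End ConvexHullUnion.

(** * Interior of a system of linear inequalities *)

Section InteriorHalfspace.
Variables (R : realType) (V : normedModType R).

Lemma interior_forall (I : finType) (A : I -> set V) :
  interior [set x | forall i, A i x] = [set x | forall i, interior (A i) x].
Proof.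
apply/seteqP; split=> x Ax.
  by move=> i; apply: filterS Ax => y; apply.
exact: filter_forall.
Qed.

Variables (f : V -> R) (c : R).
Hypotheses (f_linear : scalar f) (f_cont : continuous f).

Lemma interior_ge_linear :
  interior [set x | c <= f x] = [set x | c < f x \/ (forall v, f v = 0) /\ c <= 0].
Proof.
apply/seteqP; split=> x; last first.
  move=> [cfx|[f0 c_le0]]; last by apply: nearW => y /=; rewrite f0.
  apply: (@filterS _ _ _ [set y | c < f y]); first by move=> y /ltW.
  exact: (cvgr_gt (f x) (@f_cont x)).
move=> Hx; have cfx : c <= f x := nbhs_singleton Hx.
have [f0|/existsNP[v /eqP fv_neq0]] := pselect (forall v, f v = 0).
  by right; split=> //; rewrite -(f0 x).
left.
have line : (fun t : R => t *: v + x) @ (0 : R) --> x.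
  rewrite -[x in _ --> x]add0r -[x in _ --> x + _](scale0r v).
  by apply: cvgD; [apply: cvgZr_tmp; exact: cvg_id | exact: cvg_cst].
have /nbhs_ballP[e e_gt0 He] := line _ Hx.
have near_x s : `|s| < e -> c <= s * f v + f x.
  by move=> s_lt; rewrite -f_linear; apply: He; rewrite -ball_normE /= sub0r normrN.
have e2_gt0 : 0 < e / 2 by rewrite divr_gt0.
have e2_lt : `|e / 2| < e by rewrite gtr0_norm // ltr_pdivrMr // ltr_pMr // ltr1n.
(* one of the points [x +- (e / 2) v] of the neighbourhood has a smaller value of [f] *)
case: (ltgtP (f v) 0) => [fv_lt0|fv_gt0|fv0]; last by rewrite fv0 eqxx in fv_neq0.
  by have := near_x _ e2_lt; nra.
by have := near_x (- (e / 2)); rewrite normrN => /(_ e2_lt); nra.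
Qed.

End InteriorHalfspace.

Lemma not_interior_ge (R : realType) (V : normedModType R) (I : finType)
    (f : I -> V -> R) (c : I -> R) x :
  (forall i, scalar (f i)) -> (forall i, continuous (f i)) ->
  ~ interior [set x | forall i, c i <= f i x] x <->
  exists i, ((exists v, f i v != 0) \/ 0 < c i) /\ f i x <= c i.
Proof.
move=> f_lin f_cont; rewrite interior_forall /=; split.
  move=> /existsNP[i]; rewrite interior_ge_linear // => /not_orP[/negP].
  rewrite -leNgt => fx_le /not_andP[/existsNP[v /eqP fv]|/negP].
    by exists i; split; [left; exists v|].
  by rewrite -ltNge => c_gt0; exists i; split; [right|].
move=> [i [[[v /eqP fv]|c_gt0] fx_le]] /(_ i); rewrite interior_ge_linear //.
  by case=> [|[/(_ v)]]; [lra|].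
by case=> [|[_]]; lra.
Qed.

Lemma continuous_dotv (R : realType) n (a : 'rV[R]_n) : continuous (dotv a).
Proof.
have -> : dotv a = fun x => \sum_j a 0 j * x j 0 by apply/funext => x; rewrite /dotv mxE.
move=> x; apply: cvg_big; [exact: (fun x : R * R => add_continuous x) | exact: nbhs_filter |].
move=> j _; apply: cvgMl_tmp; [exact: nbhs_filter | exact: (@coord_continuous R n 1 j 0)].
Qed.

(** * Points of [R^n1 x R^n2] as column vectors *)

Section Pairs.
Variables (R : realType) (n1 n2 : nat).
Local Notation pt := (pt R n1 n2).
Local Notation vec n := 'cV[R]_n.

Definition pack (p : pt) : vec (n1 + n2) := col_mx p.1 p.2.
Definition unpack (z : vec (n1 + n2)) : pt := (usubmx z, dsubmx z).

Lemma packK : cancel pack unpack.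
Proof. by case=> x y; rewrite /unpack /pack col_mxKu col_mxKd. Qed.

Lemma unpackK : cancel unpack pack.
Proof. by move=> z; rewrite /pack vsubmxK. Qed.

Lemma pack_sum k (lam : 'I_k -> R) (q : 'I_k -> pt) :
  pack (\sum_i lam i *: (q i).1, \sum_i lam i *: (q i).2) = \sum_i lam i *: pack (q i).
Proof.
elim: k lam q => [|k IHk] lam q; first by rewrite !big_ord0 /pack col_mx0.
by rewrite !big_ord_recr /= -IHk /pack scale_col_mx add_col_mx.
Qed.

Lemma conv_hull_pack (S : set pt) :
  conv_hull S = [set p | convex_hull [set z | S (unpack z)] (pack p)].
Proof.
apply/seteqP; split=> p /=.
  move=> [k [lam [q [lam_ge0 [lam_sum1 [Sq ->]]]]]].
  exists k, lam, (pack \o q); split=> // [i|]; first by rewrite /= packK.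
  by rewrite pack_sum.
move=> [k [lam [z [lam_ge0 lam_sum1 Sz def_p]]]].
exists k, lam, (unpack \o z); do 3!split=> //.
apply: (can_inj packK); rewrite pack_sum def_p.
by apply: eq_bigr => i _; rewrite /= unpackK.
Qed.

Lemma polyhedron_pack (T : set (vec (n1 + n2))) :
  polyhedral T -> polyhedron [set p | T (pack p)].
Proof.
move=> [l ->]; pose M := \matrix_(i < size l) (l`_i).1.
exists (size l), (lsubmx M), (rsubmx M), (\col_(i < size l) (l`_i).2).
have dotvM p i : (lsubmx M *m p.1 + rsubmx M *m p.2) i 0 = dotv (l`_i).1 (pack p).
  by rewrite -mul_row_col hsubmxK -dotv_row rowK.
apply/seteqP; split=> p /= Hp.
  by move=> i; rewrite dotvM mxE; apply: Hp; rewrite mem_nth.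
move=> h /(nthP (0, 0))[i il <-]; have := Hp (Ordinal il).
by rewrite dotvM mxE.
Qed.

Lemma coord_bounded_unpack (S : set pt) :
  bounded_pts S -> coord_bounded [set z | S (unpack z)].
Proof.
move=> [B HB]; exists B => z /HB[B1 B2] i; rewrite -(vsubmxK z).
case: (splitP i) => j ij.
  by rewrite (_ : i = lshift n2 j) ?col_mxEu //; apply: val_inj.
by rewrite (_ : i = rshift n1 j) ?col_mxEd //; apply: val_inj.
Qed.

Lemma polyhedral_leV_pack k (M : 'M[R]_(k, n1 + n2)) (c : vec k) :
  polyhedral [set z | [set p | leV c (M *m pack p)] (unpack z)].
Proof.
rewrite (_ : [set z | _] = [set z | leV c (M *m z)]); first exact: polyhedral_geV.
by apply/seteqP; split=> z /=; rewrite unpackK.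
Qed.

End Pairs.

Section UnpackDiffInterior.
Variables (R : realType) (n1 n2 k : nat) (M : 'M[R]_(k, n1 + n2)) (c : 'cV[R]_k).
Variable P : set (pt R n1 n2).

Definition nonstrict_piece (i : 'I_k) : set 'cV[R]_(n1 + n2) :=
  [set z | ((exists p, dotv (row i M) (pack p) != 0) \/ 0 < c i 0) /\
           ([set z | P (unpack z)] `&` [set z | dotv (row i M) z <= c i 0]) z].

Lemma unpack_setD_interior :
  [set z | (P `\` interior [set p | leV c (M *m pack p)]) (unpack z)] =
  \bigcup_i nonstrict_piece i.
Proof.
have -> : [set p | leV c (M *m pack p)] =
          [set p | forall i, c i 0 <= dotv (row i M) (pack p)].
  by apply/seteqP; split=> p H i; [rewrite dotv_row | rewrite -dotv_row]; exact: H.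
have f_lin i : scalar (fun p => dotv (row i M) (pack p)).
  by move=> a [x y] [x2 y2]; rewrite /pack /= -add_col_mx -scale_col_mx linearP.
have f_cont i : continuous (fun p => dotv (row i M) (pack p)).
  have -> : (fun p => dotv (row i M) (pack p)) =
      (fun p => dotv (lsubmx (row i M)) p.1 + dotv (rsubmx (row i M)) p.2).
    by apply/funext => p; rewrite /pack -dotv_row_col hsubmxK.
  move=> p; apply: cvgD;
    [apply: (continuous_comp (f := fst)) | apply: (continuous_comp (f := snd))];
    by [exact: cvg_fst | exact: cvg_snd | exact: continuous_dotv].
apply/seteqP; split=> z /=.
  move=> [Pz /(not_interior_ge _ _ f_lin f_cont)[i [nondeg le_c]]].
  by exists i => //; split=> //; split=> //; rewrite -[z]unpackK.
move=> [i _ [nondeg [Pz le_c]]]; split=> //.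
by apply/(not_interior_ge _ _ f_lin f_cont); exists i; rewrite unpackK.
Qed.

End UnpackDiffInterior.

Section Systems.
Variable R : realType.

Lemma leV_col_mx k1 k2 (a b : 'cV[R]_k1) (c d : 'cV[R]_k2) :
  leV (col_mx a c) (col_mx b d) = (leV a b /\ leV c d).
Proof.
apply/propext; split=> [H|[Hab Hcd] i].
  split=> i; [have := H (lshift k2 i) | have := H (rshift k1 i)];
    by rewrite !(col_mxEu, col_mxEd).
case: (splitP i) => j ij.
  by rewrite (_ : i = lshift k2 j) ?col_mxEu //; apply: val_inj.
by rewrite (_ : i = rshift k1 j) ?col_mxEd //; apply: val_inj.
Qed.

Lemma leV_add2r k (d a b : 'cV[R]_k) : leV (a + d) (b + d) = leV a b.
Proof. by apply/propext; split=> H i; have := H i; rewrite !mxE lerD2r. Qed.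

Variables (n1 n2 m1 m2 : nat).
Variables (A1 : 'M[rat]_(m1, n1)) (G1 : 'M[rat]_(m1, n2)) (b1 : 'cV[rat]_m1).
Variables (A2 : 'M[rat]_(m2, n1)) (G2 : 'M[rat]_(m2, n2)) (b2 : 'cV[rat]_m2).

Lemma leV_sub_mul_row_col k n m (b : 'cV[R]_k) (A : 'M[R]_(k, n)) (G : 'M[R]_(k, m)) x y :
  leV (b - A *m x) (G *m y) = leV b (row_mx A G *m col_mx x y).
Proof. by rewrite mul_row_col -(leV_add2r (A *m x)) subrK addrC. Qed.

Lemma Pset_leV :
  Pset R A1 G1 b1 A2 G2 b2 =
  [set p | leV (col_mx 0 (col_mx (mxR b1) (mxR b2)))
             (col_mx 1%:M (col_mx (row_mx (mxR A1) (mxR G1)) (row_mx (mxR A2) (mxR G2)))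
               *m pack p)].
Proof.
apply/seteqP; split=> p; rewrite /= !mul_col_mx mul1mx !leV_col_mx -!leV_sub_mul_row_col.
  by rewrite -col_mx0 leV_col_mx => -[? [? [? ?]]].
by rewrite -col_mx0 leV_col_mx => -[[? ?] [? ?]].
Qed.

Lemma C_ID_leV (w : 'cV[R]_n2) :
  C_ID A2 G2 b2 w =
  [set p | leV (col_mx (mxR b2 - ones R m2 - mxR G2 *m w) (- ones R n2 - w))
             (col_mx (row_mx (mxR A2) (mxR G2)) (row_mx 0 1%:M) *m pack p)].
Proof.
apply/funext => p; rewrite /= mul_col_mx !mul_row_col mul0mx mul1mx add0r leV_col_mx.
rewrite -(leV_add2r (mxR G2 *m w) (_ - _ - _)) -(leV_add2r w (- _ - _)) !subrK.
by rewrite -addrA -mulmxDr.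
Qed.

End Systems.

Unset Implicit Arguments.

Theorem proposition3 (R : realType) (n1 n2 m1 m2 r1 r2 : nat)
  (d2 : 'rV[rat]_n2)
  (A1 : 'M[rat]_(m1, n1)) (G1 : 'M[rat]_(m1, n2)) (b1 : 'cV[rat]_m1)
  (A2 : 'M[rat]_(m2, n1)) (G2 : 'M[rat]_(m2, n2)) (b2 : 'cV[rat]_m2)
  (hr1 : (r1 <= n1)%N) (hr2 : (r2 <= n2)%N)
  (hbnd : bounded_pts (Pset R A1 G1 b1 A2 G2 b2))
  (w : 'cV[R]_n2) (hw : improving r2 d2 w) :
  polyhedron (conv_hull (Pset R A1 G1 b1 A2 G2 b2 `\` interior (C_ID A2 G2 b2 w))).
Proof.
rewrite conv_hull_pack; apply: polyhedron_pack.
rewrite C_ID_leV unpack_setD_interior.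
apply: polyhedral_convex_hull_bigcup => i.
  apply/polyhedral_if/polyhedralI; last exact: polyhedral_halfspace.
  by rewrite Pset_leV; exact: polyhedral_leV_pack.
by apply: coord_bounded_sub (coord_bounded_unpack hbnd) => z [_ []].
Qed.
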